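(* Let $\mathcal{X}=\{x_1,\dots,x_n\}$, $\mathcal{X}_{\mathrm{in}}\subseteq\mathcal{X}$ with $n_{\mathrm{in}}$ points, and let $\mathcal{X}_{\mathrm{out}}\subseteq\mathcal{X}_{\mathrm{in}}$ be a random subset of size $n_{\mathrm{out}}$. Let $\mathbf{k}$ be a reproducing kernel generating $K$, i.e. $K=(\mathbf{k}(x_i,x_j))_{i,j=1}^n$. If $p_{\mathrm{in}}-q_{\mathrm{out}}$ is $(K,\nu)$-sub-Gaussian on an event $\mathcal{E}$, then $(\mathbb{P}_{\mathrm{in}}-\mathbb{P}_{\mathrm{out}})\mathbf{k}$ is $(\mathbf{k},\nu)$-sub-Gaussian on $\mathcal{E}$.
   Context: $p_{\mathrm{in},i}=\mathbf{1}\{x_i\in\mathcal{X}_{\mathrm{in}}\}/n_{\mathrm{in}}$, $q_{\mathrm{out},i}=\mathbf{1}\{x_i\in\mathcal{X}_{\mathrm{out}}\}/n_{\mathrm{out}}$. $(\mathbb{P}_{\mathrm{in}}-\mathbb{P}_{\mathrm{out}})\mathbf{k}:=\frac{1}{n_{\mathrm{in}}}\sum_{x\in\mathcal{X}_{\mathrm{in}}}\mathbf{k}(x,\cdot)-\frac1{n_{\mathrm{out}}}\sum_{x\in\mathcal{X}_{\mathrm{out}}}\mathbf{k}(x,\cdot)\in\mathcal{H}_{\mathbf{k}}$ (the RKHS of $\mathbf{k}$). A random $\phi\in\mathcal{H}_{\mathbf{k}}$ is $(\mathbf{k},\nu)$-sub-Gaussian on $\mathcal{E}$ if $\nu>0$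 and $\mathbb{E}[\exp(\langle f,\phi\rangle_{\mathbf{k}})\mathbf{1}_{\mathcal{E}}]\le\exp(\frac{\nu^2}{2}\|f\|_{\mathbf{k}}^2)$ for all $f\in\mathcal{H}_{\mathbf{k}}$. A random $w\in\mathbb{R}^n$ is $(K,\nu)$-sub-Gaussian on $\mathcal{E}$ if $K$ is SPSD, $\nu>0$, and $\mathbb{E}[\exp(u^\top Kw)\mathbf{1}_{\mathcal{E}}]\le\exp(\frac{\nu^2}{2}u^\top Ku)$ for all $u\in\mathbb{R}^n$. *)

From HB Require Import structures.
From mathcomp Require Import all_boot all_order all_algebra.
From mathcomp Require Import all_classical all_reals all_analysis.
Set Implicit Arguments. Unset Strict Implicit. Unset Printing Implicit Defensive.
Import Order.TTheory GRing.Theory Num.Theory.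
Local Open Scope classical_set_scope.
Local Open Scope ring_scope.

Definition bilin (R : pzRingType) (n : nat) (u : 'cV[R]_n) (K : 'M[R]_n)
  (w : 'cV[R]_n) : R := ((u^T *m K *m w) 0 0).

Definition SPSD (R : realType) (n : nat) (K : 'M[R]_n) : Prop :=
  K^T = K /\ forall u : 'cV[R]_n, 0 <= bilin u K u.

Definition gram (R : realType) (T : Type) (n : nat) (k : T -> T -> R)
  (x : 'I_n -> T) : 'M[R]_n := \matrix_(i, j) k (x i) (x j).

(* (H, inner, ev, kf) is the RKHS of the kernel k on T:
   H is a real inner-product space, complete for the induced norm, whose
   elements are (via the injective linear map ev) functions T -> R,
   containing kf x = k(x, .) and satisfying the reproducing property. *)
Record is_RKHS (R : realType) (T : Type) (k : T -> T -> R) (H : lmodType R)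
  (inner : H -> H -> R) (ev : H -> T -> R) (kf : T -> H) : Prop := {
  inner_linl : forall (a : R) (f g h : H),
      inner (a *: f + g) h = a * inner f h + inner g h;
  inner_sym : forall f g, inner f g = inner g f;
  inner_ge0 : forall f, 0 <= inner f f;
  inner_eq0 : forall f, inner f f = 0 -> f = 0;
  inner_complete : forall u : nat -> H,
      (forall e : R, 0 < e -> exists N : nat, forall m p : nat,
          (N <= m)%N -> (N <= p)%N -> inner (u m - u p) (u m - u p) < e) ->
      exists l : H, forall e : R, 0 < e -> exists N : nat, forall m : nat,
          (N <= m)%N -> inner (u m - l) (u m - l) < e;
  ev_lin : forall (a : R) (f g : H) (t : T),
      ev (a *: f + g) t = a * ev f t + ev g t;
  ev_inj : forall f g, ev f = ev g -> f = g;
  ev_kf : forall t, ev (kf t) = k t;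
  reproducing : forall (f : H) (t : T), inner f (kf t) = ev f t
}.

Definition subgauss_vec (R : realType) (d : measure_display)
  (Omega : measurableType d) (P : probability Omega R) (n : nat)
  (E : set Omega) (K : 'M[R]_n) (nu : R) (w : Omega -> 'cV[R]_n) : Prop :=
  SPSD K /\ 0 < nu /\
  forall u : 'cV[R]_n,
    (\int[P]_(om in E) (expR (bilin u K (w om)))%:E <=
     (expR (nu ^+ 2 / 2 * bilin u K u))%:E)%E.

Definition subgauss_rkhs (R : realType) (d : measure_display)
  (Omega : measurableType d) (P : probability Omega R) (H : lmodType R)
  (inner : H -> H -> R) (E : set Omega) (nu : R) (phi : Omega -> H) : Prop :=
  0 < nu /\
  forall f : H,
    (\int[P]_(om in E) (expR (inner f (phi om)))%:E <=
     (expR (nu ^+ 2 / 2 * inner f f))%:E)%E.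

Definition pq_diff (R : realType) (n : nat) (Xin Xout : {set 'I_n})
  (nout : nat) : 'cV[R]_n :=
  \col_i ((i \in Xin)%:R / (#|Xin|)%:R - (i \in Xout)%:R / nout%:R).

Definition embed_diff (R : realType) (T : Type) (H : lmodType R) (kf : T -> H)
  (n : nat) (x : 'I_n -> T) (Xin Xout : {set 'I_n}) (nout : nat) : H :=
  ((#|Xin|)%:R^-1 *: \sum_(i in Xin) kf (x i))
  - (nout%:R^-1 *: \sum_(i in Xout) kf (x i)).

From HB Require Import structures.
From mathcomp Require Import all_boot all_order all_algebra.
From mathcomp Require Import all_classical all_reals all_analysis.
From mathcomp Require Import lra.
Set Implicit Arguments. Unset Strict Implicit. Unset Printing Implicit Defensive.
Import Order.TTheory GRing.Theory Num.Theory.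
Local Open Scope classical_set_scope.
Local Open Scope ring_scope.

(* The map [G a = sum_i a_i k(x_i, .)] from R^n to the RKHS is an isometry
   for the Gram form: <G a, G b> = a^T K b, and [(P_in - P_out) k] is
   [G (p_in - q_out)].  For a test function f, the functional w |-> <f, G w>
   vanishes on the kernel of K (there G w = 0), so it is w |-> u^T K w for
   some u.  Then G u is the orthogonal projection of f onto the span of the
   k(x_i, .), whence u^T K u = ||G u||^2 <= ||f||^2, and the vector
   sub-Gaussian bound at u gives the RKHS bound at f. *)

Lemma bilinE (R : comPzRingType) (n : nat) (a : 'cV[R]_n) (K : 'M[R]_n)
    (b : 'cV[R]_n) :
  bilin a K b = \sum_i \sum_j a i 0 * b j 0 * K i j.
Proof.
rewrite /bilin mxE exchange_big; apply: eq_bigr => j _.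
rewrite mxE mulr_suml; apply: eq_bigr => i _.
by rewrite !mxE mulrAC.
Qed.

Lemma submx_ker (F : fieldType) (m n : nat) (A : 'M[F]_(m, n)) (v : 'rV[F]_n) :
  (forall z : 'cV[F]_n, A *m z = 0 -> v *m z = 0) -> (v <= A)%MS.
Proof.
move=> vA; rewrite submxE; apply/eqP/matrixP => i j.
have /vA : A *m col j (cokermx A) = 0 by rewrite colE mulmxA mulmx_coker mul0mx.
by rewrite colE mulmxA -colE => /matrixP/(_ i 0); rewrite !mxE.
Qed.

Lemma subgauss_rkhs_of_vec (R : realType) (d : measure_display)
    (Omega : measurableType d) (P : probability Omega R) (H : lmodType R)
    (inner : H -> H -> R) (n : nat) (E : set Omega) (K : 'M[R]_n) (nu : R)
    (w : Omega -> 'cV[R]_n) (phi : Omega -> H) :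
  subgauss_vec P E K nu w ->
  (forall f, exists u, (forall om, inner f (phi om) = bilin u K (w om)) /\
                       bilin u K u <= inner f f) ->
  subgauss_rkhs P inner E nu phi.
Proof.
move=> [_ [nu_gt0 hw]] hrep; split => // f.
have [u [phiE le_uf]] := hrep f.
rewrite (_ : (fun om => _) = fun om => (expR (bilin u K (w om)))%:E); last first.
  by apply: funext => om; rewrite phiE.
apply: le_trans (hw u) _; rewrite lee_fin ler_expR ler_wpM2l //.
by rewrite divr_ge0 ?sqr_ge0.
Qed.

Section RKHS.
Variables (R : realType) (T : Type) (k : T -> T -> R) (H : lmodType R).
Variables (inner : H -> H -> R) (ev : H -> T -> R) (kf : T -> H).
Hypothesis hH : is_RKHS k inner ev kf.

Lemma inner0l (h : H) : inner 0 h = 0.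
Proof.
have := inner_linl hH 1 0 0 h.
rewrite scaler0 addr0 mul1r; lra.
Qed.

Lemma inner_suml (I : finType) (p : pred I) (a : I -> R) (g : I -> H) (h : H) :
  inner (\sum_(i | p i) a i *: g i) h = \sum_(i | p i) a i * inner (g i) h.
Proof.
apply: (big_rec2 (fun y1 y2 => inner y2 h = y1)); first exact: inner0l.
by move=> i y1 y2 _ <-; rewrite (inner_linl hH).
Qed.

Lemma inner_sumr (I : finType) (p : pred I) (a : I -> R) (g : I -> H) (h : H) :
  inner h (\sum_(i | p i) a i *: g i) = \sum_(i | p i) a i * inner h (g i).
Proof.
rewrite (inner_sym hH) inner_suml.
by apply: eq_bigr => i _; rewrite (inner_sym hH).
Qed.

Lemma innerBl (f g h : H) : inner (f - g) h = inner f h - inner g h.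
Proof. by rewrite addrC -scaleN1r (inner_linl hH) mulN1r addrC. Qed.

Lemma innerBr (f g h : H) : inner h (f - g) = inner h f - inner h g.
Proof. by rewrite (inner_sym hH) innerBl !(inner_sym hH h). Qed.

Lemma inner_proj_le (f g : H) : inner g g = inner f g -> inner g g <= inner f f.
Proof.
move=> ggE; have := inner_ge0 hH (f - g).
by rewrite innerBl !innerBr (inner_sym hH g f) -ggE; lra.
Qed.

Variables (n : nat) (x : 'I_n -> T).

Definition kcomb (a : 'cV[R]_n) : H := \sum_i a i 0 *: kf (x i).

Lemma inner_kcomb (a b : 'cV[R]_n) :
  inner (kcomb a) (kcomb b) = bilin a (gram k x) b.
Proof.
rewrite bilinE inner_suml; apply: eq_bigr => i _.
rewrite inner_sumr mulr_sumr; apply: eq_bigr => j _.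
by rewrite (reproducing hH) (ev_kf hH) mxE mulrA.
Qed.

Lemma inner_kcombr (f : H) (a : 'cV[R]_n) :
  inner f (kcomb a) = ((\row_j inner f (kf (x j))) *m a) 0 0.
Proof. by rewrite inner_sumr mxE; apply: eq_bigr => i _; rewrite !mxE mulrC. Qed.

Lemma kcomb_representer (f : H) :
  exists u, (forall w, inner f (kcomb w) = bilin u (gram k x) w) /\
            bilin u (gram k x) u <= inner f f.
Proof.
set K := gram k x; set v := \row_j inner f (kf (x j)).
have vK : (v <= K)%MS.
  apply: submx_ker => z Kz; apply/matrixP => i j; rewrite !ord1 -inner_kcombr.
  have : inner (kcomb z) (kcomb z) = 0.
    by rewrite inner_kcomb /bilin -mulmxA Kz mulmx0 mxE.
  by move/(inner_eq0 hH) ->; rewrite (inner_sym hH) inner0l mxE.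
pose u := (v *m pinvmx K)^T.
have uE w : inner f (kcomb w) = bilin u K w.
  by rewrite /bilin trmxK mulmxKpV // inner_kcombr.
exists u; split => //.
by rewrite -inner_kcomb inner_proj_le // inner_kcomb uE.
Qed.

Lemma embed_diff_kcomb (Xin Xout : {set 'I_n}) (nout : nat) :
  embed_diff kf x Xin Xout nout = kcomb (pq_diff R Xin Xout nout).
Proof.
rewrite /kcomb; under [RHS]eq_bigr => i _ do rewrite mxE scalerBl.
rewrite sumrB; congr (_ - _); rewrite scaler_sumr big_mkcond;
  by apply: eq_bigr => i _; case: (i \in _); rewrite ?mul1r ?mul0r ?scale0r.
Qed.

End RKHS.

Theorem lemmaA2 (R : realType) (T : Type) (k : T -> T -> R)
  (H : lmodType R) (inner : H -> H -> R) (ev : H -> T -> R) (kf : T -> H)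
  (hH : is_RKHS k inner ev kf)
  (n : nat) (x : 'I_n -> T) (x_inj : injective x)
  (Xin : {set 'I_n}) (nout : nat)
  (d : measure_display) (Omega : measurableType d) (P : probability Omega R)
  (Xout : Omega -> {set 'I_n})
  (hsub : forall om, Xout om \subset Xin)
  (hcard : forall om, #|Xout om| = nout)
  (E : set Omega) (nu : R) :
  subgauss_vec P E (gram k x) nu (fun om => pq_diff R Xin (Xout om) nout) ->
  subgauss_rkhs P inner E nu (fun om => embed_diff kf x Xin (Xout om) nout).
Proof.
move=> hw; apply: subgauss_rkhs_of_vec hw _ => f.
have [u [uE le_uf]] := kcomb_representer hH x f.
by exists u; split=> // om; rewrite embed_diff_kcomb uE.
Qed.
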